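(* Let $ABC$ be a triangle with side lengths $a,b,c$, semiperimeter $s$, circumcenter $O$ and circumradius $R$. Let $P$ be a point with barycentric coordinates $t_1:t_2:t_3$ with respect to $ABC$, where $t_1,t_2,t_3>0$, and let $t=t_1+t_2+t_3$. Then $$R^2-OP^2\ge\frac{4s^2\,t_1t_2t_3}{t^3},$$ with equality if and only if $t_1:t_2:t_3=a:b:c$, i.e. $P$ is the incenter of $ABC$.
   Context: A point $P$ has barycentric coordinates $t_1:t_2:t_3$ (with $t_1+t_2+t_3\neq0$) with respect to triangle $ABC$ if $P=\frac{t_1A+t_2B+t_3C}{t_1+t_2+t_3}$ (as vectors). *)

From Stdlib Require Import Reals.
Open Scope R_scope.

Definition pt := (R * R)%type.

Definition dist2 (P Q : pt) : R :=
  (fst P - fst Q) ^ 2 + (snd P - snd Q) ^ 2.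

Definition edist (P Q : pt) : R := sqrt (dist2 P Q).

Definition noncollinear (A B C : pt) : Prop :=
  (fst B - fst A) * (snd C - snd A) - (snd B - snd A) * (fst C - fst A) <> 0.

Definition is_circumcenter (O A B C : pt) : Prop :=
  edist O A = edist O B /\ edist O A = edist O C.

Definition bary (A B C : pt) (t1 t2 t3 : R) : pt :=
  ((t1 * fst A + t2 * fst B + t3 * fst C) / (t1 + t2 + t3),
   (t1 * snd A + t2 * snd B + t3 * snd C) / (t1 + t2 + t3)).

From Stdlib Require Import Reals Lra Psatz.
Open Scope R_scope.

(* For a point P with barycentric coordinates x:y:z the Lagrange (Leibniz)
   identity gives, for every point O,
     OP^2 = (x OA^2 + y OB^2 + z OC^2)/(x+y+z) - (xy AB^2 + yz BC^2 + zx CA^2)/(x+y+z)^2.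
   When O is the circumcenter the first term is R^2, so the power
   R^2 - OP^2 equals (t1 t2 c^2 + t2 t3 a^2 + t3 t1 b^2)/t^2.  Subtracting
   4 s^2 t1 t2 t3 / t^3 = (a+b+c)^2 t1 t2 t3 / t^3 leaves, by a purely
   algebraic identity, the weighted sum of squares
     (t3 (t1 b - t2 a)^2 + t1 (t2 c - t3 b)^2 + t2 (t1 c - t3 a)^2) / t^3,
   which is nonnegative for positive weights and vanishes exactly when
   t1 : t2 : t3 = a : b : c. *)

Lemma sq_edist (P Q : pt) : edist P Q ^ 2 = dist2 P Q.
Proof.
  unfold edist, dist2. rewrite pow2_sqrt; [reflexivity |].
  apply Rplus_le_le_0_compat; apply pow2_ge_0.
Qed.

Lemma edist_pos (P Q : pt) : P <> Q -> 0 < edist P Q.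
Proof.
  intro HPQ. unfold edist. apply sqrt_lt_R0. unfold dist2.
  destruct P as [p1 p2], Q as [q1 q2]; simpl.
  destruct (Req_dec p1 q1), (Req_dec p2 q2); subst; try congruence; nra.
Qed.

Lemma dist2_bary (A B C O : pt) (x y z : R) : x + y + z <> 0 ->
  dist2 O (bary A B C x y z) =
  (x * dist2 O A + y * dist2 O B + z * dist2 O C) / (x + y + z)
  - (x * y * dist2 A B + y * z * dist2 B C + z * x * dist2 C A) / (x + y + z) ^ 2.
Proof.
  intro Hsum. destruct A as [a1 a2], B as [b1 b2], C as [c1 c2], O as [o1 o2].
  unfold dist2, bary; simpl. field. exact Hsum.
Qed.

Lemma power_bary (A B C O : pt) (x y z : R) : x + y + z <> 0 ->
  is_circumcenter O A B C ->
  edist O A ^ 2 - edist O (bary A B C x y z) ^ 2 =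
  (x * y * edist A B ^ 2 + y * z * edist B C ^ 2 + z * x * edist C A ^ 2)
  / (x + y + z) ^ 2.
Proof.
  intros Hsum [HB HC].
  assert (EB : dist2 O B = dist2 O A) by (rewrite <- !sq_edist, HB; reflexivity).
  assert (EC : dist2 O C = dist2 O A) by (rewrite <- !sq_edist, HC; reflexivity).
  rewrite !sq_edist, dist2_bary, EB, EC by exact Hsum.
  field. exact Hsum.
Qed.

Definition incenter_defect (a b c t1 t2 t3 : R) : R :=
  t3 * (t1 * b - t2 * a) ^ 2 + t1 * (t2 * c - t3 * b) ^ 2 + t2 * (t1 * c - t3 * a) ^ 2.

Lemma power_gap_identity (a b c t1 t2 t3 : R) : t1 + t2 + t3 <> 0 ->
  (t1 * t2 * c ^ 2 + t2 * t3 * a ^ 2 + t3 * t1 * b ^ 2) / (t1 + t2 + t3) ^ 2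
  - 4 * ((a + b + c) / 2) ^ 2 * (t1 * t2 * t3) / (t1 + t2 + t3) ^ 3
  = incenter_defect a b c t1 t2 t3 / (t1 + t2 + t3) ^ 3.
Proof. intro Hsum. unfold incenter_defect. field. exact Hsum. Qed.

Lemma incenter_defect_nonneg (a b c t1 t2 t3 : R) :
  0 < t1 -> 0 < t2 -> 0 < t3 -> 0 <= incenter_defect a b c t1 t2 t3.
Proof.
  intros h1 h2 h3. unfold incenter_defect.
  repeat apply Rplus_le_le_0_compat;
    apply Rmult_le_pos; try lra; apply pow2_ge_0.
Qed.

Lemma weighted_squares_eq0 (u v w x y z : R) :
  0 < u -> 0 < v -> 0 < w -> u * x ^ 2 + v * y ^ 2 + w * z ^ 2 = 0 ->
  x = 0 /\ y = 0 /\ z = 0.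
Proof.
  intros hu hv hw Hsum.
  assert (Hx : 0 <= x ^ 2) by apply pow2_ge_0.
  assert (Hy : 0 <= y ^ 2) by apply pow2_ge_0.
  assert (Hz : 0 <= z ^ 2) by apply pow2_ge_0.
  assert (Ex : x ^ 2 = 0) by nra.
  assert (Ey : y ^ 2 = 0) by nra.
  assert (Ez : z ^ 2 = 0) by nra.
  repeat split; nra.
Qed.

Lemma incenter_defect_eq0 (a b c t1 t2 t3 : R) :
  0 < a -> 0 < t1 -> 0 < t2 -> 0 < t3 ->
  incenter_defect a b c t1 t2 t3 = 0 <->
  exists k : R, t1 = k * a /\ t2 = k * b /\ t3 = k * c.
Proof.
  intros ha h1 h2 h3. split.
  - intro H0. unfold incenter_defect in H0.
    destruct (weighted_squares_eq0 _ _ _ _ _ _ h3 h1 h2 H0) as [Zab [Zbc Zac]].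
    exists (t1 / a). repeat split.
    + field. lra.
    + apply Rmult_eq_reg_l with a; [field_simplify; lra | lra].
    + apply Rmult_eq_reg_l with a; [field_simplify; lra | lra].
  - intros [k [e1 [e2 e3]]]. subst. unfold incenter_defect. ring.
Qed.

Theorem mainTheorem3 (A B C O : pt) (t1 t2 t3 : R) :
  noncollinear A B C ->
  is_circumcenter O A B C ->
  0 < t1 -> 0 < t2 -> 0 < t3 ->
  let a := edist B C in
  let b := edist C A in
  let c := edist A B in
  let s := (a + b + c) / 2 in
  let Rc := edist O A in
  let t := t1 + t2 + t3 in
  let P := bary A B C t1 t2 t3 in
  Rc ^ 2 - edist O P ^ 2 >= 4 * s ^ 2 * (t1 * t2 * t3) / t ^ 3 /\
  (Rc ^ 2 - edist O P ^ 2 = 4 * s ^ 2 * (t1 * t2 * t3) / t ^ 3 <->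
   exists k : R, t1 = k * a /\ t2 = k * b /\ t3 = k * c).
Proof.
  intros Hnc Hcirc h1 h2 h3 a b c s Rc t P.
  assert (Ht3 : 0 < t ^ 3) by (apply pow_lt; unfold t; lra).
  (* Nondegeneracy forces B <> C, which the equality case needs. *)
  assert (Ha : 0 < a) by (apply edist_pos; intro E; subst; apply Hnc; ring).
  assert (Hgap : Rc ^ 2 - edist O P ^ 2 - 4 * s ^ 2 * (t1 * t2 * t3) / t ^ 3
                 = incenter_defect a b c t1 t2 t3 / t ^ 3).
  { unfold Rc, P, s, t. rewrite power_bary by (assumption || lra).
    rewrite <- power_gap_identity by lra. fold a b c. ring. }
  pose proof (incenter_defect_nonneg a b c t1 t2 t3 h1 h2 h3) as Hnn.
  rewrite <- (incenter_defect_eq0 a b c t1 t2 t3 Ha h1 h2 h3).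
  assert (Hq : 0 <= incenter_defect a b c t1 t2 t3 / t ^ 3).
  { unfold Rdiv. apply Rmult_le_pos; [lra | left; apply Rinv_0_lt_compat; lra]. }
  split; [lra | split; intro H].
  - apply Rdiv_eq_reg_r with (t ^ 3); [rewrite Rdiv_0_l; lra | lra].
  - rewrite H, Rdiv_0_l in Hgap. lra.
Qed.
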